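(* Consider $\bm{y}=\bm{A}\bm{x}+\bm{w}$ over $\mathbb{H}\in\{\mathbb{R},\mathbb{C}\}$, with $\bm A$ having i.i.d. entries $\mathcal{N}(0,1/m)$ (resp. $\mathcal{CN}(0,1/m)$), Gaussian noise of variance $\sigma_w^2=\delta\sigma_0^2$ ($\delta=m/n$, $\sigma_0^2>0$ constant), and signal entries i.i.d. Bernoulli-Gaussian, $p_x=(1-\epsilon)\Delta_{x=0}+\epsilon\,p_G(x;0,\sigma_x^2)$ (resp. $(1-\epsilon)\Delta_{|x|=0}+\epsilon\,p_{CG}(x;0,\sigma_x^2)$), $\epsilon\in(0,1]$, recovered by AMP with the MMSE (posterior mean) denoiser. Let $\delta^\dagger$ be the MSE-optimal measurement ratio as characterized in the context. Then $\delta^{\dagger}<2$. Moreover, if $$\sigma_x^2<\frac{\sigma_0^2}{\epsilon\left(1-R^\infty I(R^\infty,\epsilon)\right)}\ \text{(real case)},\qquad \sigma_x^2<\frac{\sigma_0^2}{\epsilon\left(1-R^\infty I_C(R^\infty,\epsilon)\right)}\ \text{(complex case)},$$ then $\delta^{\dagger}<1$.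
   Context: $p_G(x;0,s^2)$ is the real Gaussian density, $p_{CG}(x;0,s^2)=\frac{1}{\pi s^2}\exp(-|x|^2/s^2)$ the circular complex Gaussian density. For $\sigma_e>0$ let $R=\frac{\sigma_x^2}{\sigma_e^2+\sigma_x^2}$, $$I(R,\epsilon)=\int_{\mathbb{R}}\frac{\phi(x)\,x^2}{1+\frac{1-\epsilon}{\epsilon}\frac{1}{\sqrt{1-R}}\exp\!\left(-\frac{R}{1-R}\frac{x^2}{2}\right)}dx,\quad I_C(R,\epsilon)=\int_{\mathbb{C}}\frac{\phi_C(x)\,|x|^2}{1+\frac{1-\epsilon}{\epsilon}\frac{1}{1-R}\exp\!\left(-\frac{R}{1-R}|x|^2\right)}dx,$$ with $\phi$ the standard real normal density and $\phi_C=p_{CG}(\cdot;0,1)$. The state-evolution MSE of the MMSE denoiser at effective noise level $\sigma_e$ is $\mathrm{Err}(\sigma_e)=\epsilon\sigma_x^2(1-RI(R,\epsilon))$ (real) or $\epsilon\sigma_x^2(1-RI_C(R,\epsilon))$ (complex), and the state evolution is $(\sigma_e^{t+1})^2=\frac1\delta\mathrm{Err}(\sigma_e^t)+\delta\sigma_0^2$; assuming AMP converges, its fixed point $\sigma_e^\infty$ satisfies $(\sigma_e^\infty)^2=\frac1\delta\mathrm{Err}_\infty+\delta\sigma_0^2$ with $\mathrm{Err}_\infty=\mathrm{Err}(\sigma_e^\infty)$. The minimal achievable $\mathrm{Err}_\infty$ over $\delta$ is attained when $(\sigma_e^\infty)^4=4\sigma_0^2\mathrm{Err}_\infty$, and the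 optimal ratio is then $\delta^\dagger=\frac{(\sigma_e^\infty)^2}{2\sigma_0^2}$, with $\sigma_e^\infty$ the solution of this condition and $R^\infty=\frac{\sigma_x^2}{(\sigma_e^\infty)^2+\sigma_x^2}$. *)

From mathcomp Require Import all_boot all_order all_algebra.
From mathcomp Require Import all_classical all_reals all_analysis.
Set Implicit Arguments. Unset Strict Implicit. Unset Printing Implicit Defensive.
Import Order.TTheory GRing.Theory Num.Theory.
Local Open Scope ring_scope.

Section Defs.
Variable R : realType.

Definition phiG (x : R) : R := (Num.sqrt (2 * pi))^-1 * expR (- (x ^+ 2) / 2).
(* standard circular complex normal density on C ~ R x R: (1/pi) exp(-|x|^2) *)
Definition phiCG (x : R * R) : R := pi^-1 * expR (- (x.1 ^+ 2 + x.2 ^+ 2)).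

Definition I_real (Rr eps : R) : R :=
  Rintegral (@lebesgue_measure R) setT
    (fun x : R => phiG x * x ^+ 2 /
       (1 + (1 - eps) / eps * (Num.sqrt (1 - Rr))^-1
              * expR (- (Rr / (1 - Rr)) * (x ^+ 2 / 2)))).

Definition I_cplx (Rr eps : R) : R :=
  Rintegral ((@lebesgue_measure R) \x (@lebesgue_measure R))%E setT
    (fun x : R * R => phiCG x * (x.1 ^+ 2 + x.2 ^+ 2) /
       (1 + (1 - eps) / eps * (1 - Rr)^-1
              * expR (- (Rr / (1 - Rr)) * (x.1 ^+ 2 + x.2 ^+ 2)))).

Definition Ifun (cplx : bool) (Rr eps : R) : R :=
  if cplx then I_cplx Rr eps else I_real Rr eps.

(* R = sigma_x^2 / (sigma_e^2 + sigma_x^2) ; sx2 = sigma_x^2, se = sigma_e *)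
Definition Rratio (sx2 se : R) : R := sx2 / (se ^+ 2 + sx2).

(* state-evolution MSE of the MMSE denoiser at effective noise level se *)
Definition Err (cplx : bool) (eps sx2 se : R) : R :=
  eps * sx2 * (1 - Rratio sx2 se * Ifun cplx (Rratio sx2 se) eps).

End Defs.

(* At the fixed point, se^4 = 4 s02 Err, so delta < 2 amounts to Err < se^2, and the
   extra hypothesis of the second claim says exactly Err < s02, whence se^2 < 2 s02.
   For Err < se^2, bound the integrand of I below via 1 / (1 + y) >= 1 - y: since
   phi(x) x^2 integrates to 1 and its product with the exponential weight to (1 - R)^(3/2)
   (resp. (1 - R)^2 in the complex case), I >= 1 - (1 - eps) / eps * (1 - R).  Hence
   Err <= sx2 (1 - R) (eps + (1 - eps) R) <= sx2 (1 - R) = R se^2 < se^2.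
   The Gaussian second moments are computed without differentiating under the integral:
   e^y >= 1 + y bounds t |-> int exp(-x^2 / 2t^2) = t sqrt(2 pi) below by a curve touching it
   at t = s, and matching the slopes there forces the value of int x^2 exp(-x^2 / 2s^2). *)

From mathcomp Require Import all_boot all_order all_algebra.
From mathcomp Require Import all_classical all_reals all_analysis.
From mathcomp Require Import measurable_realfun.
From mathcomp Require Import ring lra.
Set Implicit Arguments. Unset Strict Implicit. Unset Printing Implicit Defensive.
Import Order.TTheory GRing.Theory Num.Theory.
Local Open Scope ring_scope.

Section nonneg_integrals.
Context d (T : measurableType d) (R : realType) (m : {measure set T -> \bar R}).
Implicit Types (f g u v : T -> R) (a b c : R).

Lemma ge0_integralZl_fin f c b : 0 <= c -> (forall x, 0 <= f x) ->
  measurable_fun setT f -> (\int[m]_x (f x)%:E = b%:E)%E ->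
  (\int[m]_x (c * f x)%:E = (c * b)%:E)%E.
Proof.
move=> c0 f0 mf intf; under eq_integral do rewrite EFinM.
rewrite ge0_integralZl_EFin// ?intf//; last exact/measurable_EFinP.
by move=> x _; rewrite lee_fin.
Qed.

Lemma ge0_integralDZ f g a : 0 <= a ->
  (forall x, 0 <= f x) -> (forall x, 0 <= g x) ->
  measurable_fun setT f -> measurable_fun setT g ->
  (\int[m]_x (f x + a * g x)%:E = \int[m]_x (f x)%:E + a%:E * \int[m]_x (g x)%:E)%E.
Proof.
move=> a0 f0 g0 mf mg; under eq_integral do rewrite EFinD EFinM.
rewrite ge0_integralD//; last 4 first.
- by move=> x _; rewrite lee_fin.
- exact/measurable_EFinP.
- by move=> x _; rewrite lee_fin mulr_ge0.
- by apply/measurable_EFinP; exact: measurable_funM.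
rewrite ge0_integralZl_EFin//; last exact/measurable_EFinP.
by move=> x _; rewrite lee_fin.
Qed.

Lemma measurable_fun_inv_1Dmul v a : 0 <= a -> (forall x, 0 <= v x) ->
  measurable_fun setT v -> measurable_fun setT (fun x => (1 + a * v x)^-1).
Proof.
move=> a0 v0 mv.
have -> : (fun x => (1 + a * v x)^-1) = (fun y => (1 + a * `|y|)^-1) \o v.
  by apply/funext => x /=; rewrite ger0_norm.
apply: measurableT_comp mv; apply: continuous_measurable_fun => y.
apply: cvgV; first by rewrite gt_eqF// ltr_wpDr// mulr_ge0.
by apply: cvgD; [exact: cvg_cst | apply: cvgMr; exact: norm_continuous].
Qed.

Lemma Rintegral_div_1Dmul_ge u v a b c : 0 <= a ->
  (forall x, 0 <= u x) -> (forall x, 0 <= v x) ->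
  measurable_fun setT u -> measurable_fun setT v ->
  (\int[m]_x (u x)%:E = b%:E)%E -> (\int[m]_x (u x * v x)%:E = c%:E)%E ->
  b - a * c <= Rintegral m setT (fun x => u x / (1 + a * v x)).
Proof.
move=> a0 u0 v0 mu mv intu intuv.
set f := fun x => u x / (1 + a * v x).
have den_ge1 x : 1 <= 1 + a * v x by rewrite lerDl mulr_ge0.
have den_gt0 x : 0 < 1 + a * v x by exact: lt_le_trans ltr01 (den_ge1 x).
have f0 x : 0 <= f x by rewrite divr_ge0// ltW.
have mf : measurable_fun setT f.
  by apply: measurable_funM => //; exact: measurable_fun_inv_1Dmul.
have f_le_u x : f x <= u x by rewrite ler_pdivrMr// ler_peMr.
have u_le x : u x <= f x + a * (u x * v x).
  have uE : u x = f x + a * (f x * v x) by rewrite /f; field; rewrite gt_eqF.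
  rewrite [leLHS]uE lerD2l ler_wpM2l// ler_wpM2r//.
have intf_le : (\int[m]_x (f x)%:E <= b%:E)%E.
  rewrite -intu; apply: ge0_le_integral => //; last by move=> x _; rewrite lee_fin.
  - by move=> x _; rewrite lee_fin.
  - exact/measurable_EFinP.
  - exact/measurable_EFinP.
have le_intf : (b%:E <= \int[m]_x (f x)%:E + a%:E * c%:E)%E.
  rewrite -intu -intuv -ge0_integralDZ//; last 2 first.
  - by move=> x; rewrite mulr_ge0.
  - exact: measurable_funM.
  apply: ge0_le_integral => //; last by move=> x _; rewrite lee_fin.
  - by move=> x _; rewrite lee_fin.
  - exact/measurable_EFinP.
  - apply/measurable_EFinP; apply: measurable_funD => //.
    by apply: measurable_funM => //; exact: measurable_funM.
have intf0 : (0 <= \int[m]_x (f x)%:E)%E.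
  by apply: integral_ge0 => x _; rewrite lee_fin f0.
rewrite /Rintegral; move: intf0 intf_le le_intf.
case: (\int[m]_x _)%E => [r| |]//= _ _; rewrite -EFinM -EFinD lee_fin; lra.
Qed.

End nonneg_integrals.

Section product_integral.
Context d1 d2 (T1 : measurableType d1) (T2 : measurableType d2) (R : realType).
Variables (m1 : {sigma_finite_measure set T1 -> \bar R})
  (m2 : {sigma_finite_measure set T2 -> \bar R}).

Lemma measurable_fun_mul_fst_snd (f : T1 -> R) (g : T2 -> R) :
  measurable_fun setT f -> measurable_fun setT g ->
  measurable_fun setT (fun z : T1 * T2 => f z.1 * g z.2).
Proof.
move=> mf mg; apply: measurable_funM.
  by apply: measurableT_comp mf _; exact: measurable_fst.
by apply: measurableT_comp mg _; exact: measurable_snd.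
Qed.

Lemma integral_prod_mul (f : T1 -> R) (g : T2 -> R) (a b : R) :
  (forall x, 0 <= f x) -> (forall y, 0 <= g y) ->
  measurable_fun setT f -> measurable_fun setT g ->
  (\int[m1]_x (f x)%:E = a%:E)%E -> (\int[m2]_y (g y)%:E = b%:E)%E ->
  (\int[m1 \x m2]_z (f z.1 * g z.2)%:E = (a * b)%:E)%E.
Proof.
move=> f0 g0 mf mg intf intg.
rewrite fubini_tonelli1//; last 2 first.
- by apply/measurable_EFinP; exact: measurable_fun_mul_fst_snd.
- by move=> z; rewrite lee_fin mulr_ge0.
have b0 : 0 <= b by rewrite -lee_fin -intg; apply: integral_ge0 => y _; rewrite lee_fin.
rewrite /fubini_F /=.
under eq_integral do rewrite (ge0_integralZl_fin (f0 _) g0 mg intg) mulrC.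
by rewrite (ge0_integralZl_fin b0 f0 mf intf) mulrC.
Qed.

End product_integral.

Section gaussian_moments.
Context (R : realType).
Local Notation mu := (@lebesgue_measure R).
Local Notation sqrt2pi := (Num.sqrt (2 * pi) : R).

Let sqrt2pi_gt0 : 0 < sqrt2pi.
Proof. by rewrite sqrtr_gt0 mulr_gt0// pi_gt0. Qed.

Lemma integral_normal_fun (s : R) : 0 < s ->
  (\int[mu]_x (normal_fun 0 s x)%:E = (s * sqrt2pi)%:E)%E.
Proof.
move=> s0; have s_neq0 : s != 0 by rewrite gt_eqF.
have peakE : (normal_peak s)^-1 = s * sqrt2pi.
  by rewrite invrK -mulrnAr sqrtrM ?sqr_ge0// sqrtr_sqr gtr0_norm// mulr_natl.
have peak_int : ((normal_peak s)%:E * \int[mu]_x (normal_fun 0 s x)%:E = 1)%E.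
  rewrite -ge0_integralZl_EFin//; last 3 first.
  - by move=> x _; rewrite lee_fin normal_fun_ge0.
  - by apply/measurable_EFinP; exact: measurable_normal_fun.
  - exact: normal_peak_ge0.
  rewrite -(integral_normal_pdf 0 s).
  by apply: eq_integral => x _; rewrite normal_pdfE// EFinM.
have int_ge0 : (0 <= \int[mu]_x (normal_fun 0 s x)%:E)%E.
  by apply: integral_ge0 => x _; rewrite lee_fin normal_fun_ge0.
move: int_ge0 peak_int.
case: (\int[mu]_x _)%E => [r| |]//=.
- move=> _ /eqP; rewrite -EFinM eqe => /eqP peak_r; congr EFin.
  have peak_neq0 : normal_peak s != 0 by rewrite gt_eqF// normal_peak_gt0.
  by rewrite -peakE; apply: (mulfI peak_neq0); rewrite peak_r mulfV.
- by move=> _; rewrite gt0_muley ?lte_fin ?normal_peak_gt0.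
Qed.

Lemma normal_fun_sqr_ge0 (s x : R) : 0 <= x ^+ 2 * normal_fun 0 s x.
Proof. by rewrite mulr_ge0 ?sqr_ge0 ?normal_fun_ge0. Qed.

Lemma measurable_normal_fun_sqr (s : R) :
  measurable_fun setT (fun x : R => x ^+ 2 * normal_fun 0 s x).
Proof. by apply: measurable_funM => //; exact: measurable_normal_fun. Qed.

Let gap (s t : R) := (s ^+ 2 *+ 2)^-1 - (t ^+ 2 *+ 2)^-1.

Let gapE (s t : R) : 0 < s -> 0 < t ->
  gap s t = (t ^+ 2 - s ^+ 2) / (2 * s ^+ 2 * t ^+ 2).
Proof. by move=> s0 t0; rewrite /gap; field; rewrite !gt_eqF. Qed.

Let gap_den_gt0 (s t : R) : 0 < s -> 0 < t -> 0 < 2 * s ^+ 2 * t ^+ 2.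
Proof. by move=> s0 t0; rewrite mulr_gt0 ?exprn_gt0// mulr_gt0 ?exprn_gt0. Qed.

Let gap_ge0 (s t : R) : 0 < s -> s <= t -> 0 <= gap s t.
Proof.
move=> s0 st; have t0 := lt_le_trans s0 st.
rewrite gapE//; apply: divr_ge0; last exact/ltW/gap_den_gt0.
by rewrite subr_ge0 ler_sqr// nnegrE ltW.
Qed.

Let gap_le0 (s t : R) : 0 < t -> t <= s -> gap s t <= 0.
Proof.
move=> t0 ts; have s0 := lt_le_trans t0 ts.
rewrite gapE// pmulr_lle0 ?invr_gt0 ?gap_den_gt0// subr_le0.
by rewrite ler_sqr// nnegrE ltW.
Qed.

Let gap_gt0 (s t : R) : 0 < s -> s < t -> 0 < gap s t.
Proof.
move=> s0 st; have t0 := lt_trans s0 st.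
rewrite gapE//; apply: divr_gt0; last exact: gap_den_gt0.
by rewrite subr_gt0 ltr_sqr// nnegrE ltW.
Qed.

Lemma normal_fun_tangent_le (s t x : R) : 0 < s -> 0 < t ->
  normal_fun 0 s x + gap s t * (x ^+ 2 * normal_fun 0 s x) <= normal_fun 0 t x.
Proof.
move=> s0 t0; rewrite /normal_fun !subr0.
have -> : - x ^+ 2 / (t ^+ 2 *+ 2) = - x ^+ 2 / (s ^+ 2 *+ 2) + gap s t * x ^+ 2.
  by rewrite /gap; field; rewrite !gt_eqF.
rewrite expRD; set e := expR _.
have -> : e + gap s t * (x ^+ 2 * e) = e * (1 + gap s t * x ^+ 2) by ring.
by rewrite ler_wpM2l ?expR_ge0// expR_ge1Dx.
Qed.

Lemma integral_sqr_normal_fun_tangent_ge (s t : R) : 0 < s -> s <= t ->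
  ((s * sqrt2pi)%:E + (gap s t)%:E * \int[mu]_x (x ^+ 2 * normal_fun 0 s x)%:E
    <= (t * sqrt2pi)%:E)%E.
Proof.
move=> s0 st; have t0 := lt_le_trans s0 st.
rewrite -!integral_normal_fun// -ge0_integralDZ ?gap_ge0//; last 4 first.
- exact: normal_fun_ge0.
- exact: normal_fun_sqr_ge0.
- exact: measurable_normal_fun.
- exact: measurable_normal_fun_sqr.
apply: ge0_le_integral => //.
- move=> x _; rewrite lee_fin addr_ge0 ?normal_fun_ge0//.
  by rewrite mulr_ge0 ?gap_ge0 ?normal_fun_sqr_ge0.
- apply/measurable_EFinP; apply: measurable_funD; first exact: measurable_normal_fun.
  by apply: measurable_funM => //; exact: measurable_normal_fun_sqr.
- by apply/measurable_EFinP; exact: measurable_normal_fun.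
- by move=> x _; rewrite lee_fin normal_fun_tangent_le.
Qed.

Lemma integral_sqr_normal_fun_tangent_le (s t : R) : 0 < t -> t <= s ->
  ((s * sqrt2pi)%:E
    <= (t * sqrt2pi)%:E + (- gap s t)%:E * \int[mu]_x (x ^+ 2 * normal_fun 0 s x)%:E)%E.
Proof.
move=> t0 ts; have s0 := lt_le_trans t0 ts.
rewrite -!integral_normal_fun// -ge0_integralDZ ?oppr_ge0 ?gap_le0//; last 4 first.
- exact: normal_fun_ge0.
- exact: normal_fun_sqr_ge0.
- exact: measurable_normal_fun.
- exact: measurable_normal_fun_sqr.
apply: ge0_le_integral => //.
- by move=> x _; rewrite lee_fin normal_fun_ge0.
- by apply/measurable_EFinP; exact: measurable_normal_fun.
- apply/measurable_EFinP; apply: measurable_funD; first exact: measurable_normal_fun.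
  by apply: measurable_funM => //; exact: measurable_normal_fun_sqr.
- move=> x _; rewrite lee_fin mulNr.
  by have := normal_fun_tangent_le x s0 t0; lra.
Qed.

(* The map [t |-> t P + m / (2 t^2)] is minimal at [t = s], so its derivative [P - m / s^3]
   vanishes there; the witness [t] below turns the gap into an explicit negative square. *)
Lemma min_at_sqr_moment (P s m : R) : 0 < P -> 0 < s -> 0 <= m ->
  (forall t, 0 < t -> s * P + gap s t * m <= t * P) -> m = P * s ^+ 3.
Proof.
move=> P0 s0 m0 min_s; set A := P * s ^+ 3.
have A0 : 0 < A by rewrite mulr_gt0// exprn_gt0.
have mA0 : 0 < m + A by exact: ltr_wpDl.
set t := s * (m + A) / (2 * A).
have t0 : 0 < t by rewrite divr_gt0 ?mulr_gt0.
have := min_s t t0; rewrite -subr_ge0.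
have -> : t * P - (s * P + gap s t * m) = - ((m - A) ^+ 2 / (8 * A * t ^+ 2)).
  by rewrite /gap /t /A; field; rewrite !gt_eqF.
have den_gt0 : 0 < 8 * A * t ^+ 2.
  by apply: mulr_gt0; [apply: mulr_gt0 | apply: exprn_gt0].
rewrite oppr_ge0 pmulr_lle0 ?invr_gt0// => sqr_le0.
by apply/eqP; rewrite -subr_eq0 -sqrf_eq0 eq_le sqr_le0 sqr_ge0.
Qed.

Lemma integral_sqr_normal_fun (s : R) : 0 < s ->
  (\int[mu]_x (x ^+ 2 * normal_fun 0 s x)%:E = (s ^+ 3 * sqrt2pi)%:E)%E.
Proof.
move=> s0; have above := integral_sqr_normal_fun_tangent_ge s0.
have below t t0 := @integral_sqr_normal_fun_tangent_le s t t0.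
have M0 : (0 <= \int[mu]_x (x ^+ 2 * normal_fun 0 s x)%:E)%E.
  by apply: integral_ge0 => x _; rewrite lee_fin normal_fun_sqr_ge0.
have s_lt2s : s < 2 * s by lra.
have := above _ (ltW s_lt2s); move: M0 below above.
case: (\int[mu]_x _)%E => [m| |]//=; last first.
  by rewrite gt0_muley ?lte_fin ?gap_gt0// addey.
move=> m0 below above _; congr EFin; rewrite mulrC.
apply: min_at_sqr_moment => // t t0; have [st|ts] := leP s t.
  by have := above t st; rewrite -EFinM -EFinD lee_fin mulrC.
by have := below t t0 (ltW ts); rewrite -EFinM -EFinD lee_fin; lra.
Qed.

End gaussian_moments.

Section gaussian_integrals_on_R2.
Context (R : realType).
Local Notation mu := (@lebesgue_measure R).
Local Notation mu2 := (mu \x mu)%E.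

Lemma measurable_fun_norm2 : measurable_fun setT (fun z : R * R => z.1 ^+ 2 + z.2 ^+ 2).
Proof.
apply: measurable_funD.
  by apply: (measurableT_comp (f := fun x : R => x ^+ 2)) => //; exact: measurable_fst.
by apply: (measurableT_comp (f := fun x : R => x ^+ 2)) => //; exact: measurable_snd.
Qed.

Lemma integral_norm2_expR (t : R) : 0 < t ->
  (\int[mu2]_z ((z.1 ^+ 2 + z.2 ^+ 2) * expR (- (z.1 ^+ 2 + z.2 ^+ 2) / t))%:E
    = (pi * t ^+ 2)%:E)%E.
Proof.
move=> t0; set s := Num.sqrt (t / 2).
have s0 : 0 < s by rewrite sqrtr_gt0 divr_gt0.
have s2 : s ^+ 2 = t / 2 by rewrite sqr_sqrtr// divr_ge0// ltW.
have g0 x : 0 <= normal_fun 0 s x := normal_fun_ge0 0 s x.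
have sg0 := normal_fun_sqr_ge0 s.
have mg := measurable_normal_fun 0 s.
have msg := measurable_normal_fun_sqr s.
have split z : (z.1 ^+ 2 + z.2 ^+ 2) * expR (- (z.1 ^+ 2 + z.2 ^+ 2) / t)
    = z.1 ^+ 2 * normal_fun 0 s z.1 * normal_fun 0 s z.2
      + normal_fun 0 s z.1 * (z.2 ^+ 2 * normal_fun 0 s z.2).
  have st : s ^+ 2 *+ 2 = t by rewrite s2 -mulr_natr divfK ?pnatr_eq0.
  rewrite /normal_fun !subr0 st.
  by rewrite (_ : - _ / t = - z.1 ^+ 2 / t + - z.2 ^+ 2 / t) ?expRD 1?opprD ?mulrDl; ring.
under eq_integral do rewrite split EFinD.
rewrite ge0_integralD//; last 4 first.
- by move=> z _; rewrite lee_fin mulr_ge0.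
- by apply/measurable_EFinP; exact: (measurable_fun_mul_fst_snd msg mg).
- by move=> z _; rewrite lee_fin mulr_ge0.
- by apply/measurable_EFinP; exact: (measurable_fun_mul_fst_snd mg msg).
rewrite (integral_prod_mul (m1 := mu) (m2 := mu) sg0 g0 msg mg
  (integral_sqr_normal_fun s0) (integral_normal_fun s0)).
rewrite (integral_prod_mul (m1 := mu) (m2 := mu) g0 sg0 mg msg
  (integral_normal_fun s0) (integral_sqr_normal_fun s0)).
rewrite -EFinD; congr EFin.
have tE : t = 2 * s ^+ 2 by rewrite s2 mulrC divfK ?pnatr_eq0.
set Q := Num.sqrt (2 * pi).
have Q2 : Q ^+ 2 = 2 * pi by rewrite sqr_sqrtr// mulr_ge0// pi_ge0.
by transitivity (2 * s ^+ 4 * Q ^+ 2); [ring | rewrite Q2 tE; ring].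
Qed.

Lemma measurable_fun_norm2_expR (t : R) : measurable_fun setT
  (fun z : R * R => (z.1 ^+ 2 + z.2 ^+ 2) * expR (- (z.1 ^+ 2 + z.2 ^+ 2) / t)).
Proof.
apply: measurable_funM; first exact: measurable_fun_norm2.
apply: measurableT_comp => //; apply: measurable_funM => //.
by apply: measurable_funN; exact: measurable_fun_norm2.
Qed.

Lemma integral_norm2_cgauss (t : R) : 0 < t ->
  (\int[mu2]_z (pi^-1 * ((z.1 ^+ 2 + z.2 ^+ 2) * expR (- (z.1 ^+ 2 + z.2 ^+ 2) / t)))%:E
    = (t ^+ 2)%:E)%E.
Proof.
move=> t0; rewrite (ge0_integralZl_fin (m := mu2) _ _ (measurable_fun_norm2_expR t)
  (integral_norm2_expR t0)).
- by rewrite mulrA mulVf ?mul1r// gt_eqF// pi_gt0.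
- by rewrite invr_ge0 pi_ge0.
- by move=> z; rewrite mulr_ge0 ?expR_ge0// addr_ge0 ?sqr_ge0.
Qed.

End gaussian_integrals_on_R2.

Section MMSE_bounds.
Context (R : realType).
Local Notation mu := (@lebesgue_measure R).
Implicit Types (r eps : R).

Lemma I_real_ge r eps : 0 < r -> r < 1 -> 0 < eps -> eps <= 1 ->
  1 - (1 - eps) / eps * (1 - r) <= I_real r eps.
Proof.
move=> r0 r1 e0 e1; set c := (1 - eps) / eps.
have c0 : 0 <= c by rewrite divr_ge0 ?subr_ge0// ltW.
set sg := Num.sqrt (1 - r).
have sg0 : 0 < sg by rewrite sqrtr_gt0 subr_gt0.
have sg2 : sg ^+ 2 = 1 - r by rewrite sqr_sqrtr// subr_ge0 ltW.
pose k := (Num.sqrt (2 * pi) : R)^-1.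
have k0 : 0 <= k by rewrite invr_ge0 sqrtr_ge0.
pose u x := k * (x ^+ 2 * normal_fun 0 1 x).
pose v x := expR (- (r / (1 - r)) * (x ^+ 2 / 2)).
have uvE x : u x * v x = k * (x ^+ 2 * normal_fun 0 sg x).
  rewrite /u /v /normal_fun !subr0 expr1n sg2.
  rewrite (_ : expR (- x ^+ 2 / ((1 - r) *+ 2))
    = expR (- x ^+ 2 / 2) * expR (- (r / (1 - r)) * (x ^+ 2 / 2))); first by ring.
  by rewrite -expRD; congr expR; field; rewrite subr_eq0 gt_eqF.
have -> : 1 - c * (1 - r) = 1 - c / sg * sg ^+ 3.
  by rewrite -sg2; field; rewrite gt_eqF.
have -> : I_real r eps = Rintegral mu setT (fun x => u x / (1 + c / sg * v x)).
  rewrite /I_real; congr Rintegral; apply/funext => x.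
  by congr (_ / _); rewrite /u /k /phiG /normal_fun subr0 expr1n; ring.
apply: Rintegral_div_1Dmul_ge.
- by rewrite divr_ge0// ltW.
- by move=> x; rewrite mulr_ge0// normal_fun_sqr_ge0.
- by move=> x; exact: expR_ge0.
- by apply: measurable_funM => //; exact: measurable_normal_fun_sqr.
- rewrite /v; apply: measurableT_comp => //; apply: measurable_funM => //.
  exact: measurable_funM.
- rewrite (ge0_integralZl_fin (m := mu) k0 (normal_fun_sqr_ge0 1)
    (measurable_normal_fun_sqr 1) (integral_sqr_normal_fun ltr01)).
  by rewrite expr1n mul1r mulVf// gt_eqF// sqrtr_gt0 mulr_gt0// pi_gt0.
- under eq_integral do rewrite uvE.
  rewrite (ge0_integralZl_fin (m := mu) k0 (normal_fun_sqr_ge0 sg)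
    (measurable_normal_fun_sqr sg) (integral_sqr_normal_fun sg0)).
  by rewrite mulrCA mulVf ?mulr1// gt_eqF// sqrtr_gt0 mulr_gt0// pi_gt0.
Qed.

Lemma I_cplx_ge r eps : 0 < r -> r < 1 -> 0 < eps -> eps <= 1 ->
  1 - (1 - eps) / eps * (1 - r) <= I_cplx r eps.
Proof.
move=> r0 r1 e0 e1; set c := (1 - eps) / eps.
have c0 : 0 <= c by rewrite divr_ge0 ?subr_ge0// ltW.
have r1' : 1 - r != 0 by rewrite subr_eq0 gt_eqF.
have -> : 1 - c * (1 - r) = 1 - c / (1 - r) * (1 - r) ^+ 2 by field.
apply: Rintegral_div_1Dmul_ge.
- by rewrite divr_ge0// subr_ge0 ltW.
- move=> z; apply: mulr_ge0; last by rewrite addr_ge0 ?sqr_ge0.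
  by rewrite mulr_ge0 ?expR_ge0// invr_ge0 pi_ge0.
- by move=> z; exact: expR_ge0.
- apply: measurable_funM; last exact: measurable_fun_norm2.
  apply: measurable_funM => //; apply: measurableT_comp => //.
  by apply: measurable_funN; exact: measurable_fun_norm2.
- apply: measurableT_comp => //; apply: measurable_funM => //.
  exact: measurable_fun_norm2.
- rewrite -(expr1n _ 2) -(integral_norm2_cgauss ltr01).
  by apply: eq_integral => z _; rewrite /phiCG divr1; congr EFin; ring.
- rewrite -(integral_norm2_cgauss (_ : 0 < 1 - r)); last by rewrite subr_gt0.
  apply: eq_integral => z _; rewrite /phiCG; congr EFin.
  rewrite (_ : expR (- _ / (1 - r)) = expR (- (z.1 ^+ 2 + z.2 ^+ 2))
    * expR (- (r / (1 - r)) * (z.1 ^+ 2 + z.2 ^+ 2))); first by ring.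
  by rewrite -expRD; congr expR; field.
Qed.

Lemma Ifun_ge cplx r eps : 0 < r -> r < 1 -> 0 < eps -> eps <= 1 ->
  1 - (1 - eps) / eps * (1 - r) <= Ifun cplx r eps.
Proof. by case: cplx; [exact: I_cplx_ge | exact: I_real_ge]. Qed.

End MMSE_bounds.

Lemma Err_lt_sqr (R : realType) cplx (eps sx2 se : R) :
  0 < eps -> eps <= 1 -> 0 < sx2 -> 0 < se -> Err cplx eps sx2 se < se ^+ 2.
Proof.
move=> e0 e1 x0 se0; rewrite /Err; set r := Rratio sx2 se.
have se2 : 0 < se ^+ 2 by rewrite exprn_gt0.
have r0 : 0 < r by rewrite divr_gt0// addr_gt0.
have r1 : r < 1 by rewrite ltr_pdivrMr ?addr_gt0// mul1r ltrDr.
have I_ge := Ifun_ge cplx r0 r1 e0 e1; set I := Ifun _ _ _ in I_ge *.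
have Err_le : eps * sx2 * (1 - r * I) <= sx2 * (1 - r) * (eps + (1 - eps) * r).
  have -> : sx2 * (1 - r) * (eps + (1 - eps) * r)
      = eps * sx2 * (1 - r * (1 - (1 - eps) / eps * (1 - r))) by field; rewrite gt_eqF.
  apply: ler_wpM2l; first by rewrite mulr_ge0// ltW.
  by rewrite lerD2l lerN2; apply: ler_wpM2l => //; exact: ltW.
have mix_le1 : eps + (1 - eps) * r <= 1 by nra.
have sx2_1r : sx2 * (1 - r) = se ^+ 2 * r.
  by rewrite /r /Rratio; field; rewrite gt_eqF// addr_gt0.
have sx2_1r_ge0 : 0 <= sx2 * (1 - r) by rewrite mulr_ge0 ?subr_ge0 ?ltW.
apply: (le_lt_trans Err_le); apply: (le_lt_trans (ler_piMr sx2_1r_ge0 mix_le1)).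
by rewrite sx2_1r gtr_pMr.
Qed.

Theorem proposition3 (R : realType) (cplx : bool) (eps sx2 s02 se : R) :
  0 < eps -> eps <= 1 -> 0 < sx2 -> 0 < s02 -> 0 < se ->
  se ^+ 4 = 4 * s02 * Err cplx eps sx2 se ->
  let delta_opt := se ^+ 2 / (2 * s02) in
  delta_opt < 2 /\
  (sx2 < s02 / (eps * (1 - Rratio sx2 se * Ifun cplx (Rratio sx2 se) eps)) ->
   delta_opt < 1).
Proof.
move=> e0 e1 x0 s0 se0 fixpoint delta_opt.
have Err_lt := Err_lt_sqr cplx e0 e1 x0 se0.
have se2 : 0 < se ^+ 2 by rewrite exprn_gt0.
have se4 : se ^+ 4 = se ^+ 2 * se ^+ 2 by rewrite -exprD.
split=> [|sx2_lt]; rewrite /delta_opt ltr_pdivrMr ?mulr_gt0//; first nra.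
set q := eps * _ in sx2_lt.
have ErrE : Err cplx eps sx2 se = sx2 * q by rewrite /Err /q; ring.
have q_gt0 : 0 < q.
  have s04 : 0 < 4 * s02 by rewrite mulr_gt0.
  by rewrite -(pmulr_rgt0 _ x0) -ErrE -(pmulr_rgt0 _ s04) -fixpoint exprn_gt0.
rewrite ltr_pdivlMr// in sx2_lt; rewrite ErrE in fixpoint; nra.
Qed.
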